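(* Let $\mathscr T$ be a functor satisfying (T1)–(T4) and $\mathcal M=(M,\le,{}^\perp)$ a complete orthomodular lattice, and put $L_{\mathcal M}=\mathscr T(\mathbf{Lin}(\mathcal M))$. Then $\mathscr P(L_{\mathcal M})=(\mathscr P(L_{\mathcal M}),\bigcup,\odot,{}^*,{\sim},\{\mathrm{id}_M\})$ is a $\mathscr T$-based orthomodular dynamic algebra.
   Context: An involutive unital quantale is $(Q,\bigsqcup,\odot,{}^*,e)$: complete join-semilattice $Q$, associative $\odot$ distributing over arbitrary joins in each argument, unit $e$, ${}^*$ with $x^{**}=x$, $(x\odot y)^*=y^*\odot x^*$, $(\bigsqcup x_i)^*=\bigsqcup x_i^*$. An involutive generalized dynamic algebra (IDA) is such a quantale with ${\sim}\colon K\to K$ satisfying, for all $x,y$ and families $(x_i)$: ${\sim}(x\odot{\sim}{\sim}y)={\sim}(x\odot y)$; ${\sim}(\bigsqcup{\sim}{\sim}x_i)={\sim}(\bigsqcup x_i)$; $({\sim}x)^*={\sim}x$; ${\sim}{\sim}({\sim}{\sim}x\odot y)={\sim}({\sim}x\sqcup{\sim}({\sim}x\sqcup y))$. Test set $\widetilde K=\{{\sim}k\}$; $\bigvee W={\sim}{\sim}\bigsqcup W$; $w^\perp={\sim}w$; $k\preceq l$ iff $\bigvee\{k,l\}=l$; $k\bullet v={\sim}{\sim}(k\odot v)$; $k\equiv l$ iff $k\bullet w=l\bullet w$ for all $w\in\widetilde K$. IDA morphisms preserve arbitrary joins, $\odot$, ${}^*$, unit, ${\sim}$ (category $\mathbb{IDA}$);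 semi-Foulis means $(\widetilde K,\preceq,{}^\perp)$ is a complete orthomodular lattice. $\mathbb{IM}$: involutive monoids and homomorphisms. For a complete orthomodular lattice $\mathcal M$: $\pi_m(x)=m\wedge(m^\perp\vee x)$; $\mathbf{Lin}(\mathcal M)$ is the set of maps $f$ admitting $f^*$ with $f(x)\le y^\perp\iff x\le f^*(y)^\perp$, an IDA under pointwise joins, composition, ${}^*$, $\mathrm{id}$, ${\sim}f=\pi_{f(1)^\perp}$, with test set $\{\pi_m\mid m\in M\}$. For an involutive submonoid $L\supseteq\{\pi_m\}$, $\mathscr P(L)$ is the IDA of subsets of $L$ with union, $A\odot B=\{a\circ b\mid a\in A,b\in B\}$, $A^*=\{a^*\mid a\in A\}$, unit $\{\mathrm{id}_M\}$, ${\sim}A=\{\pi_{(\bigvee_{a\in A}a(1))^\perp}\}$. $\mathscr T\colon\mathbb{IDA}\to\mathbb{IM}$ satisfies: (T1) $\widetilde K\subseteq\mathscr T(K)\subseteq K$, $\mathscr T(K)$ an involutive submonoid of $(K,\odot,{}^*,e)$; (T2) for semi-Foulis $\mathfrak K$ with $s=t\iff s\equiv t$ on $\mathscr T(K)$, $k\mapsto k\bullet(-)$ is an isomorphism $\mathscr T(\mathfrak K)\to\mathscr T(\mathbf{Lin}(\widetilde{\mathfrak K}))$; (T3) $f\mapsto\{f\}$ is an isomorphism $\mathscr T(\mathbf{Lin}(\mathcal M))\to\mathscr T(\mathscr P(\mathscr T(\mathbf{Lin}(\mathcal M))))$ for every complete orthomodular lattice $\mathcal M$; (T4) $\mathscr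 T(f)$ is the restriction of $f$. A $\mathscr T$-based orthomodular dynamic algebra is an IDA with: (TODA1) $(\widetilde K,\preceq,{}^\perp)$ a complete orthomodular lattice; (TODA2) every $A$ with $\mathscr T(K)\subseteq A\subseteq K$ closed under $\odot$, ${}^*$, arbitrary joins equals $K$; (TODA3) for $S,T\subseteq\mathscr T(K)$, $\bigsqcup S=\bigsqcup T$ iff $S=T$; (TODA4) for $s,t\in\mathscr T(K)$, $s=t$ iff $s\equiv t$. *)

From Stdlib Require Import ClassicalEpsilon.
Set Implicit Arguments.
Unset Strict Implicit.

Definition pairset {T : Type} (x y : T) : T -> Prop := fun z => z = x \/ z = y.
Definition image {A B : Type} (f : A -> B) (S : A -> Prop) : B -> Prop :=
  fun y => exists x, S x /\ y = f x.
Definition is_lub {T : Type} (le : T -> T -> Prop) (S : T -> Prop) (s : T) : Prop :=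
  (forall x, S x -> le x s) /\ (forall u, (forall x, S x -> le x u) -> le s u).
Definition is_glb {T : Type} (le : T -> T -> Prop) (S : T -> Prop) (s : T) : Prop :=
  (forall x, S x -> le s x) /\ (forall u, (forall x, S x -> le u x) -> le u s).

Record isCOML (T : Type) (le : T -> T -> Prop) (perp : T -> T) : Prop := {
  coml_refl : forall x, le x x;
  coml_trans : forall x y z, le x y -> le y z -> le x z;
  coml_antisym : forall x y, le x y -> le y x -> x = y;
  coml_complete : forall S : T -> Prop, exists s, is_lub le S s;
  coml_perp_invol : forall x, perp (perp x) = x;
  coml_perp_anti : forall x y, le x y -> le (perp y) (perp x);
  (* x v x^perp = 1 : every upper bound of x and x^perp is the top *)
  coml_perp_compl : forall x z, le x z -> le (perp x) z -> forall w, le w z;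
  (* orthomodular law: x <= y -> y = x v (y /\ x^perp) *)
  coml_orthomod : forall x y m, le x y -> is_glb le (pairset y (perp x)) m ->
                  is_lub le (pairset x m) y
}.

Record COML := {
  cm_car :> Type;
  cm_le : cm_car -> cm_car -> Prop;
  cm_perp : cm_car -> cm_car;
  cm_ax : isCOML cm_le cm_perp
}.

Section COMLops.
Variable M : COML.
Definition msup (S : M -> Prop) : M :=
  proj1_sig (constructive_indefinite_description _ (coml_complete (cm_ax M) S)).
Definition mtop : M := msup (fun _ => True).
Definition mjoin (a b : M) : M := msup (pairset a b).
Definition mmeet (a b : M) : M := msup (fun z => cm_le z a /\ cm_le z b).
Definition sasaki (m : M) (x : M) : M := mmeet m (mjoin (cm_perp m) x).

Definition isAdjoint (f g : M -> M) : Prop :=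
  forall x y, cm_le (f x) (cm_perp y) <-> cm_le x (cm_perp (g y)).
Definition hasAdj (f : M -> M) : Prop := exists g, isAdjoint f g.

Definition LinCar : Type := {f : M -> M | hasAdj f}.

Lemma hasAdj_id : hasAdj (fun x => x).
Proof. exists (fun x => x); intros x y; tauto. Qed.

Definition idLin : LinCar := exist _ (fun x => x) hasAdj_id.

(* Coerce a map into Lin(M); the fallback branch is never used for the
   operations below, since Lin(M) is closed under them. *)
Definition mkLin (f : M -> M) : LinCar :=
  match excluded_middle_informative (hasAdj f) with
  | left p => exist _ f p
  | right _ => idLin
  end.

Definition adjraw (f : LinCar) : M -> M :=
  proj1_sig (constructive_indefinite_description _ (proj2_sig f)).
End COMLops.

(* Signatures of involutive unital quantales with ~ (IDA signature)   *)
Record IDAS := {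
  car :> Type;
  qjoin : (car -> Prop) -> car;
  qmul : car -> car -> car;
  qinv : car -> car;
  qone : car;
  qneg : car -> car
}.
Arguments qone {i}.
Arguments qinv {i}.
Arguments qneg {i}.
Arguments qmul {i}.
Arguments qjoin {i}.

Section IDAdefs.
Variable K : IDAS.
Definition qle (x y : K) : Prop := qjoin (pairset x y) = y.

Definition is_IDA : Prop :=
  (forall x : K, qle x x) /\
  (forall x y z : K, qle x y -> qle y z -> qle x z) /\
  (forall x y : K, qle x y -> qle y x -> x = y) /\
  (forall S : K -> Prop, is_lub qle S (qjoin S)) /\
  (forall x y z : K, qmul x (qmul y z) = qmul (qmul x y) z) /\
  (forall x : K, qmul qone x = x) /\ (forall x : K, qmul x qone = x) /\
  (forall (x : K) (S : K -> Prop), qmul x (qjoin S) = qjoin (image (qmul x) S)) /\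
  (forall (x : K) (S : K -> Prop), qmul (qjoin S) x = qjoin (image (fun s => qmul s x) S)) /\
  (forall x : K, qinv (qinv x) = x) /\
  (forall x y : K, qinv (qmul x y) = qmul (qinv y) (qinv x)) /\
  (forall S : K -> Prop, qinv (qjoin S) = qjoin (image qinv S)) /\
  (forall x y : K, qneg (qmul x (qneg (qneg y))) = qneg (qmul x y)) /\
  (forall S : K -> Prop, qneg (qjoin (image (fun x => qneg (qneg x)) S)) = qneg (qjoin S)) /\
  (forall x : K, qinv (qneg x) = qneg x) /\
  (forall x y : K, qneg (qneg (qmul (qneg (qneg x)) y)) =
               qneg (qjoin (pairset (qneg x) (qneg (qjoin (pairset (qneg x) y)))))).

Definition test (k : K) : Prop := exists l, k = qneg l.
Definition tvee (W : K -> Prop) : K := qneg (qneg (qjoin W)).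
Definition bullet (k v : K) : K := qneg (qneg (qmul k v)).
Definition tequiv (k l : K) : Prop := forall w, test w -> bullet k w = bullet l w.

Definition Tst : Type := {k : K | test k}.
Definition tle (a b : Tst) : Prop := tvee (pairset (proj1_sig a) (proj1_sig b)) = proj1_sig b.
Definition tperp (a : Tst) : Tst :=
  exist _ (qneg (proj1_sig a)) (ex_intro _ (proj1_sig a) eq_refl).
Definition semiFoulis : Prop := isCOML tle tperp.

Definition bulletT (k : K) (w : Tst) : Tst :=
  exist _ (bullet k (proj1_sig w)) (ex_intro _ (qneg (qmul k (proj1_sig w))) eq_refl).
End IDAdefs.

Definition COML_of (K : IDAS) (H : semiFoulis K) : COML :=
  {| cm_car := Tst K; cm_le := @tle K; cm_perp := @tperp K; cm_ax := H |}.

Definition IDAmorph (K K' : IDAS) (f : K -> K') : Prop :=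
  (forall S, f (qjoin S) = qjoin (image f S)) /\
  (forall x y, f (qmul x y) = qmul (f x) (f y)) /\
  (forall x, f (qinv x) = qinv (f x)) /\
  f qone = qone /\
  (forall x, f (qneg x) = qneg (f x)).

Definition IMiso (K K' : IDAS) (S1 : K -> Prop) (S2 : K' -> Prop) (phi : K -> K') : Prop :=
  (forall x, S1 x -> S2 (phi x)) /\
  (forall x y, S1 x -> S1 y -> phi x = phi y -> x = y) /\
  (forall z, S2 z -> exists x, S1 x /\ phi x = z) /\
  (forall x y, S1 x -> S1 y -> phi (qmul x y) = qmul (phi x) (phi y)) /\
  (forall x, S1 x -> phi (qinv x) = qinv (phi x)) /\
  phi qone = qone.

Definition LinIDA (M : COML) : IDAS := {|
  car := LinCar M;
  qjoin := fun S => mkLin (fun x => msup (fun y => exists f, S f /\ y = proj1_sig f x));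
  qmul := fun f g => mkLin (fun x => proj1_sig f (proj1_sig g x));
  qinv := fun f => mkLin (adjraw f);
  qone := idLin M;
  qneg := fun f => mkLin (sasaki (cm_perp (proj1_sig f (mtop M))))
|}.

Definition PIDA (M : COML) (L : LinCar M -> Prop) : IDAS := {|
  car := {c : LinCar M | L c} -> Prop;
  qjoin := fun S c => exists A, S A /\ A c;
  qmul := fun A B c => exists a b, A a /\ B b /\
            proj1_sig (proj1_sig c) = (fun x => proj1_sig (proj1_sig a) (proj1_sig (proj1_sig b) x));
  qinv := fun A c => exists a, A a /\ proj1_sig (proj1_sig c) = adjraw (proj1_sig a);
  qone := fun c => proj1_sig (proj1_sig c) = (fun x => x);
  qneg := fun A c => proj1_sig (proj1_sig c) =
            sasaki (cm_perp (msup (fun y => exists a, A a /\ y = proj1_sig (proj1_sig a) (mtop M))))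
|}.

(* T is given by its object part T K (a subset of K); by (T4) its     *)
(* action on a morphism is the restriction, which must land in T K'.  *)
Definition Tfun := forall K : IDAS, K -> Prop.

Definition T1 (T : Tfun) : Prop :=
  forall K : IDAS, is_IDA K ->
    (forall k, test k -> T K k) /\ T K qone /\
    (forall x y, T K x -> T K y -> T K (qmul x y)) /\
    (forall x, T K x -> T K (qinv x)).

Definition T2 (T : Tfun) : Prop :=
  forall (K : IDAS) (HK : is_IDA K) (HF : semiFoulis K),
    (forall s t, T K s -> T K t -> (s = t <-> tequiv s t)) ->
    (forall s, T K s -> hasAdj (M := COML_of HF) (bulletT s)) /\
    IMiso (K' := LinIDA (COML_of HF)) (T K) (T (LinIDA (COML_of HF)))
          (fun s => mkLin (M := COML_of HF) (bulletT s)).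

Definition T3 (T : Tfun) : Prop :=
  forall M : COML,
    IMiso (K' := PIDA (T (LinIDA M))) (T (LinIDA M)) (T (PIDA (T (LinIDA M))))
          (fun f c => proj1_sig c = f).

Definition T4 (T : Tfun) : Prop :=
  forall (K K' : IDAS), is_IDA K -> is_IDA K' ->
    forall f : K -> K', IDAmorph f -> forall k, T K k -> T K' (f k).

Definition Tfunctor (T : Tfun) : Prop := T1 T /\ T2 T /\ T3 T /\ T4 T.

Definition TODA (T : Tfun) (K : IDAS) : Prop :=
  is_IDA K /\
  semiFoulis K /\
  (forall A : K -> Prop,
     (forall k, T K k -> A k) ->
     (forall x y, A x -> A y -> A (qmul x y)) ->
     (forall x, A x -> A (qinv x)) ->
     (forall S, (forall x, S x -> A x) -> A (qjoin S)) ->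
     forall k, A k) /\
  (forall S S' : K -> Prop, (forall x, S x -> T K x) -> (forall x, S' x -> T K x) ->
     (qjoin S = qjoin S' <-> (forall x, S x <-> S' x))) /\
  (forall s t, T K s -> T K t -> (s = t <-> tequiv s t)).

(* Every subset of L is the union of its singletons {f}, and by (T3) these
   singletons are exactly the elements of T(P(L)); this gives (TODA2) and (TODA3).
   The operation ~ of P(L) only sees s(A) = ⋁_{f ∈ A} f(1), so the tests of P(L)
   are the singletons {π_m}, and m ↦ {π_m} is an isomorphism of M onto the test
   lattice (TODA1). Since π_m(1) = m, we get {f} • {π_m} = {π_f(m)}, so
   test-equivalent singletons {f}, {g} satisfy f = g (TODA4).
   The IDA axioms of P(L) are those of the powerset quantale of the involutive
   monoid L, together with identities for ~ that s turns into lattice identities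
   in M. That L is an involutive monoid containing the Sasaki projections is (T1)
   applied to Lin(M), which requires Lin(M) itself to be an IDA. Only (T1) and
   (T3) are needed. *)

From Stdlib Require Import ClassicalEpsilon FunctionalExtensionality PropExtensionality.
From Stdlib Require Import ProofIrrelevance.

Lemma pred_ext {X : Type} (A B : X -> Prop) : (forall x, A x <-> B x) -> A = B.
Proof.
  intro H. apply functional_extensionality; intro x.
  apply propositional_extensionality, H.
Qed.

Lemma isCOML_transfer {A B : Type} (leA : A -> A -> Prop) (pA : A -> A)
    (leB : B -> B -> Prop) (pB : B -> B) (psi : B -> A) (phi : A -> B) :
  isCOML leA pA -> (forall a, psi (phi a) = a) -> (forall b, phi (psi b) = b) ->
  (forall x y, leB x y <-> leA (psi x) (psi y)) -> (forall x, psi (pB x) = pA (psi x)) ->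
  isCOML leB pB.
Proof.
  intros HA psi_phi phi_psi Hle Hp.
  assert (psi_inj : forall x y, psi x = psi y -> x = y).
  { intros x y E. rewrite <- (phi_psi x), <- (phi_psi y), E. reflexivity. }
  constructor.
  - intro x. apply Hle, (coml_refl HA).
  - intros x y z. rewrite !Hle. apply (coml_trans HA).
  - intros x y. rewrite !Hle. intros Hxy Hyx. apply psi_inj, (coml_antisym HA); assumption.
  - intro S. destruct (coml_complete HA (image psi S)) as [s [Hub Hleast]].
    exists (phi s). split.
    + intros x Hx. apply Hle. rewrite psi_phi. apply Hub. exists x; auto.
    + intros u Hu. apply Hle. rewrite psi_phi. apply Hleast.
      intros a [b [Hb ->]]. apply Hle, Hu, Hb.
  - intro x. apply psi_inj. rewrite !Hp. apply (coml_perp_invol HA).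
  - intros x y. rewrite !Hle, !Hp. apply (coml_perp_anti HA).
  - intros x z H H' w. rewrite Hle in *. rewrite Hp in H'. exact (coml_perp_compl HA H H' _).
  - intros x y m Hxy [Hlb Hglb]. rewrite Hle in Hxy.
    assert (Hm : is_glb leA (pairset (psi y) (pA (psi x))) (psi m)).
    { split.
      - intros z [-> | ->]; [| rewrite <- Hp]; apply Hle, Hlb; unfold pairset; auto.
      - intros u Hu. rewrite <- (psi_phi u). apply Hle, Hglb.
        intros z [-> | ->]; apply Hle; rewrite psi_phi; [| rewrite Hp];
          apply Hu; unfold pairset; auto. }
    destruct (coml_orthomod HA Hxy Hm) as [Hub Hleast]. split.
    + intros z [-> | ->]; apply Hle, Hub; unfold pairset; auto.
    + intros u Hu. apply Hle, Hleast.
      intros z [-> | ->]; apply Hle, Hu; unfold pairset; auto.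
Qed.

Section OrthomodularLattice.
Context {M : COML}.
Notation le := (@cm_le M).
Notation perp := (@cm_perp M).
Notation top := (mtop M).
Implicit Types a b m u x y z : M.

Lemma le_refl x : le x x. Proof. exact (coml_refl (cm_ax M) x). Qed.
Lemma le_trans {x y z} : le x y -> le y z -> le x z. Proof. apply (coml_trans (cm_ax M)). Qed.
Lemma le_antisym x y : le x y -> le y x -> x = y. Proof. apply (coml_antisym (cm_ax M)). Qed.
Lemma perp_invol x : perp (perp x) = x. Proof. apply (coml_perp_invol (cm_ax M)). Qed.
Lemma perp_anti {x y} : le x y -> le (perp y) (perp x).
Proof. apply (coml_perp_anti (cm_ax M)). Qed.

Lemma le_perp_sym x y : le x (perp y) <-> le y (perp x).
Proof.
  split; intro H; apply perp_anti in H; rewrite perp_invol in H; exact H.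
Qed.

Lemma eq_by_upper_bounds x y : (forall u, le x u <-> le y u) -> x = y.
Proof. intro H. apply le_antisym; [apply (H y) | apply (H x)]; apply le_refl. Qed.

Lemma eq_by_lower_bounds x y : (forall u, le u x <-> le u y) -> x = y.
Proof. intro H. apply le_antisym; [apply (H x) | apply (H y)]; apply le_refl. Qed.

Lemma msup_le_iff (S : M -> Prop) u : le (msup S) u <-> forall x, S x -> le x u.
Proof.
  unfold msup. destruct (constructive_indefinite_description _ _) as [s [Hub Hleast]].
  simpl. split.
  - intros H x Hx. exact (le_trans (Hub x Hx) H).
  - apply Hleast.
Qed.

Lemma msup_ub (S : M -> Prop) x : S x -> le x (msup S).
Proof. intro Hx. exact (proj1 (msup_le_iff S _) (le_refl _) x Hx). Qed.

Lemma msup_image_le_iff {I : Type} (S : I -> Prop) (k : I -> M) u :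
  le (msup (fun y => exists i, S i /\ y = k i)) u <-> forall i, S i -> le (k i) u.
Proof.
  rewrite msup_le_iff. split.
  - intros H i Hi. apply H. exists i; auto.
  - intros H y [i [Hi ->]]. auto.
Qed.

Lemma msup_image_comp {I J : Type} (S : I -> Prop) (g : I -> J) (k : J -> M) (h : I -> M) :
  (forall i, k (g i) = h i) ->
  msup (fun y => exists j, image g S j /\ y = k j) = msup (fun y => exists i, S i /\ y = h i).
Proof.
  intro Hk. apply eq_by_upper_bounds; intro u. rewrite !msup_image_le_iff. split.
  - intros H i Hi. rewrite <- Hk. apply H. exists i; auto.
  - intros H j [i [Hi ->]]. rewrite Hk. auto.
Qed.

Lemma msup_image_single {I : Type} (e : I) (k : I -> M) :
  msup (fun y => exists i, i = e /\ y = k i) = k e.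
Proof.
  apply eq_by_upper_bounds; intro u. rewrite msup_image_le_iff.
  split; [intro H; apply H | intros H i ->]; auto.
Qed.

Lemma le_top x : le x top. Proof. apply msup_ub; exact I. Qed.

Lemma mjoin_le_iff a b u : le (mjoin a b) u <-> le a u /\ le b u.
Proof.
  unfold mjoin. rewrite msup_le_iff. split.
  - intro H; split; apply H; unfold pairset; auto.
  - intros [Ha Hb] x [-> | ->]; assumption.
Qed.

Lemma msup_image_pair {I : Type} (i j : I) (k : I -> M) :
  msup (fun y => exists l, pairset i j l /\ y = k l) = mjoin (k i) (k j).
Proof.
  apply eq_by_upper_bounds; intro u. rewrite msup_image_le_iff, mjoin_le_iff. split.
  - intro H; split; apply H; unfold pairset; auto.
  - intros [Hi Hj] l [-> | ->]; assumption.
Qed.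

Lemma le_mjoin_l a b : le a (mjoin a b). Proof. apply (mjoin_le_iff a b), le_refl. Qed.
Lemma le_mjoin_r a b : le b (mjoin a b). Proof. apply (mjoin_le_iff a b), le_refl. Qed.

Lemma le_mmeet_iff a b u : le u (mmeet a b) <-> le u a /\ le u b.
Proof.
  unfold mmeet. split.
  - intro H. split; eapply le_trans; try exact H; apply msup_le_iff; tauto.
  - intro H. apply msup_ub, H.
Qed.

Lemma mmeet_le_l a b : le (mmeet a b) a. Proof. apply (le_mmeet_iff a b), le_refl. Qed.
Lemma mmeet_le_r a b : le (mmeet a b) b. Proof. apply (le_mmeet_iff a b), le_refl. Qed.

Lemma mjoin_comm a b : mjoin a b = mjoin b a.
Proof. apply eq_by_upper_bounds; intro u; rewrite !mjoin_le_iff; tauto. Qed.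

Lemma mmeet_comm a b : mmeet a b = mmeet b a.
Proof. apply eq_by_lower_bounds; intro u; rewrite !le_mmeet_iff; tauto. Qed.

Lemma perp_mjoin a b : perp (mjoin a b) = mmeet (perp a) (perp b).
Proof.
  apply eq_by_lower_bounds; intro u.
  rewrite le_mmeet_iff, le_perp_sym, mjoin_le_iff, !(le_perp_sym u). tauto.
Qed.

Lemma perp_mmeet a b : perp (mmeet a b) = mjoin (perp a) (perp b).
Proof. rewrite <- (perp_invol (mjoin _ _)), perp_mjoin, !perp_invol. reflexivity. Qed.

Lemma mmeet_is_glb a b : is_glb le (pairset a b) (mmeet a b).
Proof.
  split.
  - intros x [-> | ->]; [apply mmeet_le_l | apply mmeet_le_r].
  - intros u H. apply le_mmeet_iff; split; apply H; unfold pairset; auto.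
Qed.

Lemma orthomodular {x y} : le x y -> y = mjoin x (mmeet y (perp x)).
Proof.
  intro Hxy. destruct (coml_orthomod (cm_ax M) Hxy (mmeet_is_glb y (perp x))) as [Hub Hleast].
  apply le_antisym.
  - apply Hleast. intros z [-> | ->]; [apply le_mjoin_l | apply le_mjoin_r].
  - apply mjoin_le_iff; split; apply Hub; unfold pairset; auto.
Qed.

Lemma orthomodular_dual {a b} : le a b -> mmeet b (mjoin a (perp b)) = a.
Proof.
  intro Hab. pose proof (orthomodular (perp_anti Hab)) as E.
  apply (f_equal perp) in E.
  rewrite perp_mjoin, perp_mmeet, !perp_invol in E. symmetry; exact E.
Qed.

Lemma sasaki_mono m {x y} : le x y -> le (sasaki m x) (sasaki m y).
Proof.
  intro Hxy. apply le_mmeet_iff; split; [apply mmeet_le_l |].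
  eapply le_trans; [apply mmeet_le_r |].
  apply mjoin_le_iff; split; [apply le_mjoin_l |].
  exact (le_trans Hxy (le_mjoin_r _ _)).
Qed.

Lemma sasaki_top m : sasaki m top = m.
Proof.
  apply le_antisym; [apply mmeet_le_l |].
  apply le_mmeet_iff; split; [apply le_refl |].
  exact (le_trans (le_top _) (le_mjoin_r _ _)).
Qed.

Lemma sasaki_le_iff m x z : le (sasaki m x) z <-> le x (mjoin (perp m) (mmeet m z)).
Proof.
  split.
  - intro H. pose proof (orthomodular (le_mjoin_l (perp m) x)) as E.
    rewrite perp_invol in E.
    apply (le_trans (le_mjoin_r (perp m) x)). rewrite E.
    apply mjoin_le_iff; split; [apply le_mjoin_l |].
    eapply le_trans; [| apply le_mjoin_r].
    apply le_mmeet_iff; split; [apply mmeet_le_r |]. rewrite mmeet_comm. exact H.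
  - intro H. apply (le_trans (sasaki_mono m H)). unfold sasaki.
    assert (E : mjoin (perp m) (mjoin (perp m) (mmeet m z)) = mjoin (perp m) (mmeet m z)).
    { apply le_antisym; [apply mjoin_le_iff; split; [apply le_mjoin_l | apply le_refl] |].
      apply le_mjoin_r. }
    rewrite E, (mjoin_comm (perp m)), (orthomodular_dual (mmeet_le_l m z)).
    apply mmeet_le_r.
Qed.

Lemma sasaki_self_adjoint m : isAdjoint (sasaki m) (sasaki m).
Proof.
  intros x y. rewrite sasaki_le_iff. unfold sasaki.
  rewrite perp_mmeet, perp_mjoin, perp_invol. reflexivity.
Qed.

End OrthomodularLattice.

Section Adjoints.
Context {M : COML}.
Notation le := (@cm_le M).
Notation perp := (@cm_perp M).
Implicit Types f g h : M -> M.

Lemma adj_sym f g : isAdjoint f g -> isAdjoint g f.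
Proof. intros H x y. rewrite le_perp_sym, <- (H y x), le_perp_sym. reflexivity. Qed.

Lemma adj_unique f g h : isAdjoint f g -> isAdjoint f h -> g = h.
Proof.
  intros Hg Hh. apply functional_extensionality; intro y.
  rewrite <- (perp_invol (g y)), <- (perp_invol (h y)). f_equal.
  apply eq_by_lower_bounds; intro u. rewrite <- (Hg u y), <- (Hh u y). reflexivity.
Qed.

Lemma adj_comp f g f' g' : isAdjoint f g -> isAdjoint f' g' ->
  isAdjoint (fun x => f (f' x)) (fun y => g' (g y)).
Proof. intros H H' x y. rewrite (H _ y), (H' x). reflexivity. Qed.

Lemma adj_msup_image {I : Type} f g (S : I -> Prop) (k : I -> M) : isAdjoint f g ->
  f (msup (fun y => exists i, S i /\ y = k i)) = msup (fun y => exists i, S i /\ y = f (k i)).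
Proof.
  intro H. apply eq_by_upper_bounds; intro u.
  rewrite <- (perp_invol u), (H _ (perp u)), !msup_image_le_iff.
  split; intros Hu i Hi; apply (H _ (perp u)), Hu, Hi.
Qed.

End Adjoints.

Section LinearMaps.
Context {M : COML}.
Notation le := (@cm_le M).
Notation perp := (@cm_perp M).
Notation top := (mtop M).
Notation K := (LinIDA M).
Notation fn f := (proj1_sig f).
Implicit Types f g : LinCar M.

Lemma adjraw_spec f : isAdjoint (fn f) (adjraw f).
Proof. unfold adjraw. destruct (constructive_indefinite_description _ _) as [g Hg]. exact Hg. Qed.

Lemma adjraw_unique f (h : M -> M) : isAdjoint (fn f) h -> adjraw f = h.
Proof. apply adj_unique, adjraw_spec. Qed.

Lemma mkLin_val (h : M -> M) : hasAdj h -> fn (mkLin h) = h.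
Proof.
  intro H. unfold mkLin.
  destruct (excluded_middle_informative _); [reflexivity | contradiction].
Qed.

Lemma Lin_eq f g : fn f = fn g -> f = g.
Proof. destruct f as [f p], g as [g q]; simpl; intros ->. f_equal. apply proof_irrelevance. Qed.

Lemma Lin_ext f g : (forall x, fn f x = fn g x) -> f = g.
Proof. intro H. apply Lin_eq, functional_extensionality, H. Qed.

Lemma adj_pointwise_join (S : LinCar M -> Prop) :
  isAdjoint (fun x => msup (fun y => exists f, S f /\ y = fn f x))
            (fun y => msup (fun z => exists f, S f /\ z = adjraw f y)).
Proof.
  intros x y. rewrite msup_image_le_iff, le_perp_sym, msup_image_le_iff.
  split; intros H f Hf; [apply le_perp_sym, adjraw_spec | apply adjraw_spec, le_perp_sym];
    apply H, Hf.
Qed.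

Lemma Lin_join_val (S : LinCar M -> Prop) x :
  fn (@qjoin K S) x = msup (fun y => exists f, S f /\ y = fn f x).
Proof. simpl. rewrite mkLin_val; [reflexivity | eexists; apply adj_pointwise_join]. Qed.

Lemma Lin_mul_val f g : fn (@qmul K f g) = fun x => fn f (fn g x).
Proof. apply mkLin_val. eexists. apply adj_comp; apply adjraw_spec. Qed.

Lemma Lin_inv_val f : fn (@qinv K f) = adjraw f.
Proof. apply mkLin_val. eexists. apply adj_sym, adjraw_spec. Qed.

Lemma Lin_neg_val f : fn (@qneg K f) = sasaki (perp (fn f top)).
Proof. apply mkLin_val. eexists. apply sasaki_self_adjoint. Qed.

Lemma Lin_neg_top f : fn (@qneg K f) top = perp (fn f top).
Proof. rewrite Lin_neg_val. apply sasaki_top. Qed.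

Lemma Lin_neg_congr f g : fn f top = fn g top -> @qneg K f = @qneg K g.
Proof. intro H. apply Lin_eq. rewrite !Lin_neg_val, H. reflexivity. Qed.

Lemma Lin_join_image (k : LinCar M -> LinCar M) (h : LinCar M -> M) (S : LinCar M -> Prop) x :
  (forall f, fn (k f) x = h f) ->
  fn (@qjoin K (image k S)) x = msup (fun y => exists f, S f /\ y = h f).
Proof. intro Hk. rewrite Lin_join_val. apply msup_image_comp, Hk. Qed.

Lemma Lin_join_pair f g x : fn (@qjoin K (pairset f g)) x = mjoin (fn f x) (fn g x).
Proof. rewrite Lin_join_val. exact (msup_image_pair f g (fun h => fn h x)). Qed.

Lemma Lin_qle_iff f g : @qle K f g <-> forall x, le (fn f x) (fn g x).
Proof.
  unfold qle. split.
  - intros H x. rewrite <- H, Lin_join_pair. apply le_mjoin_l.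
  - intro H. apply Lin_ext; intro x. rewrite Lin_join_pair. apply le_antisym.
    + apply mjoin_le_iff; split; [apply H | apply le_refl].
    + apply le_mjoin_r.
Qed.

Lemma Lin_is_IDA : is_IDA K.
Proof.
  repeat split.
  - intro f. apply Lin_qle_iff; intro; apply le_refl.
  - intros f g h. rewrite !Lin_qle_iff. intros H1 H2 x. exact (le_trans (H1 x) (H2 x)).
  - intros f g. rewrite !Lin_qle_iff. intros H1 H2. apply Lin_ext; intro x. apply le_antisym; auto.
  - intros f Hf. apply Lin_qle_iff; intro x. rewrite Lin_join_val. apply msup_ub. exists f; auto.
  - intros g Hg. apply Lin_qle_iff; intro x. rewrite Lin_join_val. apply msup_image_le_iff.
    intros f Hf. apply Lin_qle_iff, Hg, Hf.
  - intros f g h. apply Lin_eq. rewrite !Lin_mul_val. reflexivity.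
  - intro f. apply Lin_eq. rewrite Lin_mul_val. reflexivity.
  - intro f. apply Lin_eq. rewrite Lin_mul_val. reflexivity.
  - intros f S. apply Lin_ext; intro x.
    rewrite Lin_mul_val, Lin_join_val, (adj_msup_image _ _ _ _ (adjraw_spec f)).
    symmetry. apply Lin_join_image. intro g. rewrite Lin_mul_val. reflexivity.
  - intros f S. apply Lin_ext; intro x. rewrite Lin_mul_val, Lin_join_val.
    symmetry. apply Lin_join_image. intro g. rewrite Lin_mul_val. reflexivity.
  - intro f. apply Lin_eq. rewrite !Lin_inv_val. apply adjraw_unique.
    rewrite Lin_inv_val. apply adj_sym, adjraw_spec.
  - intros f g. apply Lin_eq. rewrite Lin_mul_val, !Lin_inv_val. apply adjraw_unique.
    rewrite Lin_mul_val. apply adj_comp; apply adjraw_spec.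
  - intro S. apply Lin_eq. rewrite Lin_inv_val. apply adjraw_unique. intros x y.
    rewrite Lin_join_val, (Lin_join_image _ (fun f => adjraw f y)).
    + exact (adj_pointwise_join S x y).
    + intro f. rewrite Lin_inv_val. reflexivity.
  - intros f g. apply Lin_neg_congr. rewrite !Lin_mul_val, !Lin_neg_top, perp_invol. reflexivity.
  - intro S. apply Lin_neg_congr. rewrite (Lin_join_val S).
    apply Lin_join_image. intro f. rewrite !Lin_neg_top, perp_invol. reflexivity.
  - intro f. apply Lin_eq. rewrite Lin_inv_val. apply adjraw_unique.
    rewrite Lin_neg_val. apply sasaki_self_adjoint.
  - intros f g. apply Lin_neg_congr.
    rewrite Lin_neg_top, Lin_mul_val, Lin_neg_val, Lin_neg_top, perp_invol,
      !Lin_join_pair, !Lin_neg_top, Lin_join_pair, Lin_neg_top.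
    unfold sasaki. rewrite perp_mmeet. reflexivity.
Qed.

End LinearMaps.

Section PowersetMonoid.
Context {E : Type} (mul : E -> E -> E) (inv : E -> E) (one : E).
Hypothesis mul_assoc : forall a b c, mul a (mul b c) = mul (mul a b) c.
Hypothesis mul_1l : forall a, mul one a = a.
Hypothesis mul_1r : forall a, mul a one = a.
Hypothesis inv_invol : forall a, inv (inv a) = a.
Hypothesis inv_mul : forall a b, inv (mul a b) = mul (inv b) (inv a).

Definition single (e : E) : E -> Prop := fun c => c = e.
Definition pset_union (S : (E -> Prop) -> Prop) : E -> Prop := fun c => exists A, S A /\ A c.
Definition pset_mul (A B : E -> Prop) : E -> Prop := fun c => exists a b, A a /\ B b /\ c = mul a b.
Definition pset_inv (A : E -> Prop) : E -> Prop := fun c => exists a, A a /\ c = inv a.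

Lemma single_inj {e e'} : single e = single e' -> e = e'.
Proof. intro H. change (single e' e). rewrite <- H. reflexivity. Qed.

Lemma pset_union_pair_iff (A B : E -> Prop) :
  pset_union (pairset A B) = B <-> forall c, A c -> B c.
Proof.
  split.
  - intros H c Hc. rewrite <- H. exists A; split; [left |]; auto.
  - intro H. apply pred_ext; intro c. split.
    + intros [X [[-> | ->] HX]]; auto.
    + intro Hc. exists B; split; [right |]; auto.
Qed.

Lemma pset_mul_assoc A B C : pset_mul A (pset_mul B C) = pset_mul (pset_mul A B) C.
Proof.
  apply pred_ext; intro c. split.
  - intros [a [d [Ha [[b [e [Hb [He ->]]]] ->]]]].
    exists (mul a b), e. repeat split; auto. exists a, b; auto.
  - intros [d [e [[a [b [Ha [Hb ->]]]] [He ->]]]].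
    exists a, (mul b e). repeat split; auto. exists b, e; auto.
Qed.

Lemma pset_mul_1l A : pset_mul (single one) A = A.
Proof.
  apply pred_ext; intro c. split.
  - intros [a [b [-> [Hb ->]]]]. rewrite mul_1l. exact Hb.
  - intro Hc. exists one, c. unfold single. auto.
Qed.

Lemma pset_mul_1r A : pset_mul A (single one) = A.
Proof.
  apply pred_ext; intro c. split.
  - intros [a [b [Ha [-> ->]]]]. rewrite mul_1r. exact Ha.
  - intro Hc. exists c, one. unfold single. auto.
Qed.

Lemma pset_mul_union_l A S : pset_mul A (pset_union S) = pset_union (image (pset_mul A) S).
Proof.
  apply pred_ext; intro c. split.
  - intros [a [b [Ha [[B [HB Hb]] ->]]]]. exists (pset_mul A B).
    split; [exists B | exists a, b]; auto.
  - intros [X [[B [HB ->]] [a [b [Ha [Hb ->]]]]]]. exists a, b. repeat split; auto. exists B; auto.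
Qed.

Lemma pset_mul_union_r A S :
  pset_mul (pset_union S) A = pset_union (image (fun B => pset_mul B A) S).
Proof.
  apply pred_ext; intro c. split.
  - intros [b [a [[B [HB Hb]] [Ha ->]]]]. exists (pset_mul B A).
    split; [exists B | exists b, a]; auto.
  - intros [X [[B [HB ->]] [b [a [Hb [Ha ->]]]]]]. exists b, a. repeat split; auto. exists B; auto.
Qed.

Lemma pset_inv_invol A : pset_inv (pset_inv A) = A.
Proof.
  apply pred_ext; intro c. split.
  - intros [d [[a [Ha ->]] ->]]. rewrite inv_invol. exact Ha.
  - intro Hc. exists (inv c). split; [exists c |]; auto.
Qed.

Lemma pset_inv_mul A B : pset_inv (pset_mul A B) = pset_mul (pset_inv B) (pset_inv A).
Proof.
  apply pred_ext; intro c. split.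
  - intros [d [[a [b [Ha [Hb ->]]]] ->]]. exists (inv b), (inv a).
    repeat split; [exists b | exists a | apply inv_mul]; auto.
  - intros [d [e [[b [Hb ->]] [[a [Ha ->]] ->]]]]. exists (mul a b).
    split; [exists a, b | symmetry; apply inv_mul]; auto.
Qed.

Lemma pset_inv_union S : pset_inv (pset_union S) = pset_union (image pset_inv S).
Proof.
  apply pred_ext; intro c. split.
  - intros [a [[A [HA Ha]] ->]]. exists (pset_inv A). split; [exists A | exists a]; auto.
  - intros [X [[A [HA ->]] [a [Ha ->]]]]. exists a. split; auto. exists A; auto.
Qed.

Lemma pset_inv_single e : pset_inv (single e) = single (inv e).
Proof.
  apply pred_ext; intro c. unfold single. split.
  - intros [a [-> ->]]. reflexivity.
  - intros ->. exists e; auto.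
Qed.

End PowersetMonoid.

Section PowersetOfLin.
Context {M : COML} (T : Tfun) (HT1 : T1 T).
Notation le := (@cm_le M).
Notation perp := (@cm_perp M).
Notation top := (mtop M).
Notation K := (LinIDA M).
Notation L := (T (LinIDA M)).
Notation E := {c : LinCar M | L c}.
Notation P := (PIDA (T (LinIDA M))).
Notation fn c := (proj1_sig (proj1_sig c)).

Lemma L_tests k : test k -> L k. Proof. apply (HT1 _ Lin_is_IDA). Qed.
Lemma L_one : L (@qone K). Proof. apply (HT1 _ Lin_is_IDA). Qed.
Lemma L_mul {f g} : L f -> L g -> L (@qmul K f g). Proof. apply (HT1 _ Lin_is_IDA). Qed.
Lemma L_inv {f} : L f -> L (@qinv K f). Proof. apply (HT1 _ Lin_is_IDA). Qed.

Lemma L_sasaki m : L (mkLin (sasaki m)).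
Proof.
  apply L_tests. exists (mkLin (sasaki (perp m))). apply Lin_eq.
  rewrite Lin_neg_val, !mkLin_val, sasaki_top, perp_invol;
    [reflexivity | eexists; apply sasaki_self_adjoint ..].
Qed.

Definition sasE (m : M) : E := exist _ (mkLin (sasaki m)) (L_sasaki m).
Definition idE : E := exist _ (@qone K) L_one.
Definition mulE (a b : E) : E :=
  exist _ (@qmul K (proj1_sig a) (proj1_sig b)) (L_mul (proj2_sig a) (proj2_sig b)).
Definition invE (a : E) : E := exist _ (@qinv K (proj1_sig a)) (L_inv (proj2_sig a)).
Definition sup_top (A : E -> Prop) : M := msup (fun y => exists a, A a /\ y = fn a top).

Lemma E_eq (c d : E) : fn c = fn d -> c = d.
Proof.
  destruct c as [c p], d as [d q]; simpl. intro H. apply Lin_eq in H. subst d.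
  f_equal. apply proof_irrelevance.
Qed.

Lemma sasE_val m : fn (sasE m) = sasaki m.
Proof. apply mkLin_val. eexists; apply sasaki_self_adjoint. Qed.

Lemma mulE_val a b : fn (mulE a b) = fun x => fn a (fn b x).
Proof. apply Lin_mul_val. Qed.

Lemma invE_val a : fn (invE a) = adjraw (proj1_sig a).
Proof. apply Lin_inv_val. Qed.

Lemma mulE_assoc a b c : mulE a (mulE b c) = mulE (mulE a b) c.
Proof. apply E_eq. rewrite !mulE_val. reflexivity. Qed.
Lemma mulE_1l a : mulE idE a = a. Proof. apply E_eq. rewrite mulE_val. reflexivity. Qed.
Lemma mulE_1r a : mulE a idE = a. Proof. apply E_eq. rewrite mulE_val. reflexivity. Qed.

Lemma invE_invol a : invE (invE a) = a.
Proof.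
  apply E_eq. rewrite invE_val. apply adjraw_unique. rewrite invE_val.
  apply adj_sym, adjraw_spec.
Qed.

Lemma invE_mul a b : invE (mulE a b) = mulE (invE b) (invE a).
Proof.
  apply E_eq. rewrite invE_val, mulE_val, !invE_val. apply adjraw_unique.
  rewrite mulE_val. apply adj_comp; apply adjraw_spec.
Qed.

Lemma invE_sasE m : invE (sasE m) = sasE m.
Proof.
  apply E_eq. rewrite invE_val, sasE_val. apply adjraw_unique.
  change (isAdjoint (fn (sasE m)) (sasaki m)). rewrite sasE_val. apply sasaki_self_adjoint.
Qed.

Lemma sasE_inj {m m'} : sasE m = sasE m' -> m = m'.
Proof.
  intro H. apply (f_equal (fun c => fn c top)) in H.
  rewrite !sasE_val, !sasaki_top in H. exact H.
Qed.

Lemma P_join_eq : @qjoin P = pset_union.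
Proof. reflexivity. Qed.

Lemma P_one_eq : @qone P = single idE.
Proof.
  apply pred_ext; intro c. simpl. unfold single.
  split; [intro H; apply E_eq, H | intros ->; reflexivity].
Qed.

Lemma P_mul_eq : @qmul P = pset_mul mulE.
Proof.
  do 2 (apply functional_extensionality; intro). apply pred_ext; intro c. simpl. split.
  - intros [a [b [Ha [Hb H]]]]. exists a, b. repeat split; auto.
    apply E_eq. rewrite mulE_val. exact H.
  - intros [a [b [Ha [Hb ->]]]]. exists a, b. repeat split; auto. apply mulE_val.
Qed.

Lemma P_inv_eq : @qinv P = pset_inv invE.
Proof.
  apply functional_extensionality; intro A. apply pred_ext; intro c. simpl. split.
  - intros [a [Ha H]]. exists a; split; auto. apply E_eq. rewrite invE_val. exact H.
  - intros [a [Ha ->]]. exists a; split; auto. apply invE_val.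
Qed.

Lemma P_neg_eq A : @qneg P A = single (sasE (perp (sup_top A))).
Proof.
  apply pred_ext; intro c. simpl. unfold single. split.
  - intro H. apply E_eq. rewrite sasE_val. exact H.
  - intros ->. apply sasE_val.
Qed.

Lemma sup_top_le_iff A u : le (sup_top A) u <-> forall a, A a -> le (fn a top) u.
Proof. apply msup_image_le_iff. Qed.

Lemma sup_top_single e : sup_top (single e) = fn e top.
Proof. exact (msup_image_single e (fun a => fn a top)). Qed.

Lemma sup_top_neg A : sup_top (@qneg P A) = perp (sup_top A).
Proof. rewrite P_neg_eq, sup_top_single, sasE_val. apply sasaki_top. Qed.

Lemma P_negneg_eq A : @qneg P (@qneg P A) = single (sasE (sup_top A)).
Proof. rewrite P_neg_eq, sup_top_neg, perp_invol. reflexivity. Qed.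

Lemma P_neg_congr A B : sup_top A = sup_top B -> @qneg P A = @qneg P B.
Proof. intro H. rewrite !P_neg_eq, H. reflexivity. Qed.

Lemma sup_top_union S : sup_top (pset_union S) = msup (fun y => exists A, S A /\ y = sup_top A).
Proof.
  apply eq_by_upper_bounds; intro u. rewrite sup_top_le_iff, msup_image_le_iff. split.
  - intros H A HA. apply sup_top_le_iff. intros a Ha. apply H. exists A; auto.
  - intros H a [A [HA Ha]]. exact (proj1 (sup_top_le_iff A u) (H A HA) a Ha).
Qed.

Lemma sup_top_pair A B : sup_top (pset_union (pairset A B)) = mjoin (sup_top A) (sup_top B).
Proof.
  rewrite sup_top_union. exact (msup_image_pair A B sup_top).
Qed.

Lemma sup_top_mul A B :
  sup_top (pset_mul mulE A B) = msup (fun y => exists a, A a /\ y = fn a (sup_top B)).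
Proof.
  apply eq_by_upper_bounds; intro u. rewrite sup_top_le_iff, msup_image_le_iff. split.
  - intros H a Ha. unfold sup_top. rewrite (adj_msup_image _ _ _ _ (adjraw_spec (proj1_sig a))).
    apply msup_image_le_iff. intros b Hb. specialize (H (mulE a b)).
    rewrite mulE_val in H. apply H. exists a, b; auto.
  - intros H c [a [b [Ha [Hb ->]]]]. rewrite mulE_val.
    specialize (H a Ha). unfold sup_top in H.
    rewrite (adj_msup_image _ _ _ _ (adjraw_spec (proj1_sig a))), msup_image_le_iff in H.
    auto.
Qed.

Lemma sup_top_mul_single e B : sup_top (pset_mul mulE (single e) B) = fn e (sup_top B).
Proof. rewrite sup_top_mul. exact (msup_image_single e (fun a => fn a (sup_top B))). Qed.

Lemma P_qle_iff (A B : E -> Prop) : @qle P A B <-> forall c, A c -> B c.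
Proof. apply pset_union_pair_iff. Qed.

Lemma P_is_IDA : is_IDA P.
Proof.
  unfold is_IDA. rewrite P_join_eq, P_mul_eq, P_inv_eq, P_one_eq. repeat split.
  - intro A. apply P_qle_iff; auto.
  - intros A B C. rewrite !P_qle_iff. auto.
  - intros A B. rewrite !P_qle_iff. intros H1 H2. apply pred_ext; split; auto.
  - intros A HA. apply P_qle_iff. intros c Hc. exists A; auto.
  - intros B HB. apply P_qle_iff. intros c [A [HA Hc]].
    exact (proj1 (P_qle_iff A B) (HB A HA) c Hc).
  - intros A B C. apply pset_mul_assoc, mulE_assoc.
  - intro A. apply pset_mul_1l, mulE_1l.
  - intro A. apply pset_mul_1r, mulE_1r.
  - intros A S. apply pset_mul_union_l.
  - intros A S. apply pset_mul_union_r.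
  - intro A. apply pset_inv_invol, invE_invol.
  - intros A B. apply pset_inv_mul, invE_mul.
  - intro S. apply pset_inv_union.
  - intros A B. apply P_neg_congr. rewrite !sup_top_mul, !sup_top_neg, perp_invol. reflexivity.
  - intro S. apply P_neg_congr. rewrite !sup_top_union.
    apply msup_image_comp. intro A. rewrite !sup_top_neg, perp_invol. reflexivity.
  - intro A. rewrite P_neg_eq, pset_inv_single, invE_sasE. reflexivity.
  - intros A B. apply P_neg_congr.
    rewrite sup_top_neg, P_negneg_eq, sup_top_mul_single, sasE_val,
      !sup_top_pair, !sup_top_neg, sup_top_pair, sup_top_neg.
    unfold sasaki. rewrite perp_mmeet. reflexivity.
Qed.

Lemma P_test_iff (k : P) : test k <-> exists m, k = single (sasE m).
Proof.
  split.
  - intros [A ->]. exists (perp (sup_top A)). apply P_neg_eq.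
  - intros [m ->]. exists (single (sasE (perp m))).
    rewrite P_neg_eq, sup_top_single, sasE_val, sasaki_top, perp_invol. reflexivity.
Qed.

Definition sasaki_test (m : M) : Tst P :=
  exist _ (single (sasE m)) (proj2 (P_test_iff _) (ex_intro _ m eq_refl)).

Lemma sup_top_sasaki_test m : sup_top (proj1_sig (sasaki_test m)) = m.
Proof. simpl. rewrite sup_top_single, sasE_val. apply sasaki_top. Qed.

Lemma sasaki_test_sup_top (t : Tst P) : sasaki_test (sup_top (proj1_sig t)) = t.
Proof.
  destruct t as [k Hk]. destruct (proj1 (P_test_iff k) Hk) as [m ->].
  unfold sasaki_test. simpl. rewrite sup_top_single, sasE_val, sasaki_top.
  f_equal. apply proof_irrelevance.
Qed.

Lemma P_tle_iff (a b : Tst P) :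
  tle a b <-> le (sup_top (proj1_sig a)) (sup_top (proj1_sig b)).
Proof.
  rewrite <- (sasaki_test_sup_top b) at 1. unfold tle, tvee, sasaki_test. cbn [proj1_sig].
  rewrite P_negneg_eq, P_join_eq, sup_top_pair, sup_top_single, sasE_val, sasaki_top.
  split.
  - intro H. apply single_inj, sasE_inj in H. rewrite <- H. apply le_mjoin_l.
  - intro H. do 2 f_equal. apply le_antisym.
    + apply mjoin_le_iff; split; [exact H | apply le_refl].
    + apply le_mjoin_r.
Qed.

Lemma P_semiFoulis : semiFoulis P.
Proof.
  apply (isCOML_transfer _ _ _ _ (fun t : Tst P => sup_top (proj1_sig t)) sasaki_test
           (cm_ax M)).
  - exact sup_top_sasaki_test.
  - exact sasaki_test_sup_top.
  - exact P_tle_iff.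
  - intro t. apply sup_top_neg.
Qed.

Context (HT3 : T3 T).

Lemma single_val_eq (e : E) : (fun c : E => proj1_sig c = proj1_sig e) = single e.
Proof.
  apply pred_ext; intro c. unfold single.
  split; [intro H; apply E_eq; rewrite H | intros ->]; reflexivity.
Qed.

Lemma T3_single e : T P (single e).
Proof. rewrite <- single_val_eq. apply (proj1 (HT3 M)), proj2_sig. Qed.

Lemma T3_is_single {A} : T P A -> exists e, A = single e.
Proof.
  intro HA. destruct (proj1 (proj2 (proj2 (HT3 M))) A HA) as [f [Hf <-]].
  exists (exist _ f Hf). exact (single_val_eq (exist _ f Hf)).
Qed.

Lemma P_union_singletons (A : P) : pset_union (fun X => exists c, A c /\ X = single c) = A.
Proof.
  apply pred_ext; intro c. split.
  - intros [X [[d [Hd ->]] ->]]. exact Hd.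
  - intro Hc. exists (single c). split; [exists c | unfold single]; auto.
Qed.

Lemma P_generated_by_T (A : P -> Prop) :
  (forall k, T P k -> A k) ->
  (forall x y, A x -> A y -> A (qmul x y)) ->
  (forall x, A x -> A (qinv x)) ->
  (forall S, (forall x, S x -> A x) -> A (qjoin S)) ->
  forall k, A k.
Proof.
  intros HT _ _ Hjoin k. rewrite <- (P_union_singletons k).
  apply Hjoin. intros X [c [_ ->]]. apply HT, T3_single.
Qed.

Lemma P_union_singletons_incl (S S' : P -> Prop) :
  (forall X, S X -> T P X) -> (forall X, S' X -> T P X) ->
  pset_union S = pset_union S' -> forall X, S X -> S' X.
Proof.
  intros HS HS' H X HX. destruct (T3_is_single (HS X HX)) as [e ->].
  assert (He : pset_union S' e).
  { rewrite <- H. exists (single e). split; [exact HX | reflexivity]. }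
  destruct He as [Y [HY He]]. destruct (T3_is_single (HS' Y HY)) as [e' ->].
  unfold single in He. rewrite He. exact HY.
Qed.

Lemma P_join_inj_on_T (S S' : P -> Prop) :
  (forall X, S X -> T P X) -> (forall X, S' X -> T P X) ->
  (qjoin S = qjoin S' <-> (forall X, S X <-> S' X)).
Proof.
  intros HS HS'. split.
  - intros H X. split; apply P_union_singletons_incl; auto.
  - intro H. apply pred_ext in H. rewrite H. reflexivity.
Qed.

Lemma P_tequiv_eq_on_T (s t : P) : T P s -> T P t -> (s = t <-> tequiv s t).
Proof.
  intros Hs Ht. split; [intros -> w _; reflexivity |]. intro H.
  destruct (T3_is_single Hs) as [e ->], (T3_is_single Ht) as [e' ->].
  f_equal. apply E_eq, functional_extensionality; intro m.
  specialize (H (single (sasE m)) (proj2 (P_test_iff _) (ex_intro _ m eq_refl))).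
  unfold bullet in H. rewrite P_mul_eq, !P_negneg_eq, !sup_top_mul_single, !sup_top_single,
    !sasE_val, !sasaki_top in H.
  exact (sasE_inj (single_inj H)).
Qed.

End PowersetOfLin.

Theorem lemma5p1 (T : Tfun) (HT : Tfunctor T) (M : COML) :
  TODA T (PIDA (T (LinIDA M))).
Proof.
  destruct HT as [HT1 [_ [HT3 _]]].
  exact (conj (P_is_IDA T HT1)
        (conj (P_semiFoulis T HT1)
        (conj (P_generated_by_T T HT3)
        (conj (P_join_inj_on_T T HT3)
              (P_tequiv_eq_on_T T HT1 HT3))))).
Qed.
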